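(* Let $\mathcal W'_r=\{W\in\mathcal W_r: W=\widehat W\}$ be the collection of primary wiretap sets. Then $\min_{W\in\mathcal W_r}\Omega(W)=\min_{W\in\mathcal W'_r}\Omega(W)$.
   Context: $\mathcal G=(\mathcal V,\mathcal E)$ is a finite directed acyclic graph (multiple edges allowed); $S$ is the set of source nodes (exactly the nodes without input edges), $\rho\notin S$ the sink (no output edges), and every node other than $\rho$ has a directed path to $\rho$. For a node $\sigma$ and edge $e$, $\sigma\to e$ means there is a directed path from $\sigma$ whose last edge is $e$. For $C\subseteq\mathcal E$: $D_C=\{\sigma\in S:\exists e\in C,\ \sigma\to e\}$, $I_C=\{\sigma\in S:$ no path from $\sigma$ to $\rho$ after deleting $C\}$; $\Lambda(\mathcal N)=\{C\subseteq\mathcal E:I_C\neq\emptyset\}$. $\mathcal W_r=\{W\subseteq\mathcal E:|W|\le r\}$ for a nonnegative integer $r$. For $W\subseteq\mathcal E$, $\Omega(W)=\min\{|C|-|W|: C\in\Lambda(\mathcal N),\ W\subseteq C,\ D_W\subseteq I_C\}$. Cuts separating edge sets: for a node set $U$ and edge set $W$, subdivide each $e\in W$ by a new node $v_e$ splitting $e$ into $e^1$ (from $\mathrm{tail}(e)$ to $v_e$) and $e^2$ (from $v_e$ to $\mathrm{head}(e)$); a cut separating $W$ from $U$ is an edge set obtained from an edge set of the subdivided graph whose deletion leaves no path from $U$ to any $v_e$, after replacing each $e^1$ or $e^2$ by $e$. A minimum cut is one of minimum size. A minimum cut separating $W$ from $U$ is primary if it separates from $U$ every minimum cut separating $W$ from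 $U$; it exists and is unique. $\widehat W$ denotes the primary minimum cut separating $W$ from $D_W$; $W$ is called primary if $W=\widehat W$. *)

From mathcomp Require Import all_boot.
Set Implicit Arguments. Unset Strict Implicit. Unset Printing Implicit Defensive.

Record net := Net {
  nV : finType;
  nE : finType;
  tl : nE -> nV;
  hd : nE -> nV;
  sink : nV }.

Definition reach (Nd X : finType) (tlx hdx : X -> Nd) (ok : pred X) : rel Nd :=
  connect (fun a b => [exists x, [&& ok x, tlx x == a & hdx x == b]]).

Section Net.
Variable N : net.
Local Notation V := (nV N).
Local Notation E := (nE N).

Definition sources : {set V} := [set v | [forall e, @hd N e != v]].

Definition wf_net : Prop :=
  [/\ (* acyclic: no directed path of length >= 1 from a node to itself *)
      (forall e : E, ~~ reach (@tl N) (@hd N) predT (@hd N e) (@tl N e)),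
      sink N \notin sources,
      (forall e : E, @tl N e != sink N) &
      (forall v : V, v != sink N -> reach (@tl N) (@hd N) predT v (sink N))].

(* sigma -> e : a directed path from sigma whose last edge is e *)
Definition to_edge (s : V) (e : E) : bool := reach (@tl N) (@hd N) predT s (@tl N e).

Definition Dset (C : {set E}) : {set V} :=
  [set s in sources | [exists e in C, to_edge s e]].

Definition Iset (C : {set E}) : {set V} :=
  [set s in sources | ~~ reach (@tl N) (@hd N) (fun e => e \notin C) s (sink N)].

Definition in_Lambda (C : {set E}) : bool := Iset C != set0.

(* Omega(W) = min { |C| - |W| : C in Lambda, W \subset C, D_W \subset I_C }.
   (The feasible family is nonempty under wf_net, C = setT, and every value
   is <= #|E|, so the default #|E| of the big min is harmless.) *)
Definition Omega (W : {set E}) : nat :=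
  \big[minn/#|E|]_(C : {set E} | [&& in_Lambda C, W \subset C & Dset W \subset Iset C])
     (#|C| - #|W|).

(* The graph subdivided at the edges of W: nodes V + E (inr e is v_e, only used
   for e in W), edges E * bool: (e,false) is e itself when e \notin W and e^1
   when e \in W; (e,true) is e^2 (only a genuine edge when e \in W). *)
Definition sd_ok (W : {set E}) (x : E * bool) : bool := x.2 ==> (x.1 \in W).
Definition sd_tl (W : {set E}) (x : E * bool) : V + E :=
  if x.2 then inr x.1 else inl (@tl N x.1).
Definition sd_hd (W : {set E}) (x : E * bool) : V + E :=
  if x.2 then inl (@hd N x.1)
  else if x.1 \in W then inr x.1 else inl (@hd N x.1).

Definition is_cut (W : {set E}) (U : {set V}) (C : {set E}) : bool :=
  [exists K : {set E * bool},
    [&& K \subset [set x | sd_ok W x],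
        [forall u in U, forall e in W,
           ~~ reach (sd_tl W) (sd_hd W) (fun x => sd_ok W x && (x \notin K))
                    (inl u) (inr e)]
      & C == [set x.1 | x in K]]].

Definition is_min_cut (W : {set E}) (U : {set V}) (C : {set E}) : bool :=
  is_cut W U C && [forall C' : {set E}, is_cut W U C' ==> (#|C| <= #|C'|)].

Definition is_primary_min_cut (W : {set E}) (U : {set V}) (C : {set E}) : bool :=
  is_min_cut W U C &&
  [forall C' : {set E}, is_min_cut W U C' ==> is_cut C' U C].

(* W is primary: W = \hat W, i.e. W is the (unique) primary minimum cut
   separating W from D_W *)
Definition primary (W : {set E}) : bool := is_primary_min_cut W (Dset W) W.

End Net.

(* Every W may be replaced by its primary minimum cut X from D_W: then |X| <= |W|,
   X is itself primary, and Omega X <= Omega W.  Every edge of a minimum cut leads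
   to W, so D_X is contained in D_W, and any C witnessing Omega W yields the
   witness (C \ W) u X for X.  Minimum cuts are the cuts of the subdivided graph
   given by node sets S containing U; since the cut size is submodular in S, the
   minimum cut with the smallest S is the primary one. *)

From mathcomp Require Import all_boot.
From mathcomp Require Import zify.
Set Implicit Arguments. Unset Strict Implicit. Unset Printing Implicit Defensive.

Section Reach.
Variables (Nd X : finType) (tlx hdx : X -> Nd).
Implicit Types (ok : pred X).

Lemma reach_ind ok (P : Nd -> Prop) a b :
  P a -> (forall x, ok x -> P (tlx x) -> P (hdx x)) -> reach tlx hdx ok a b -> P b.
Proof.
move=> Pa step /connectP [p]; elim: p a Pa => [|c p IH] a Pa /=; first by move=> _ ->.
case/andP=> /existsP [x /and3P [okx /eqP tx /eqP hx]] pth lst.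
apply: IH pth lst; rewrite -hx; apply: step okx _; by rewrite tx.
Qed.

Lemma reach_refl ok a : reach tlx hdx ok a a.
Proof. exact: connect0. Qed.

Lemma reach_trans ok a b c :
  reach tlx hdx ok a b -> reach tlx hdx ok b c -> reach tlx hdx ok a c.
Proof. exact: connect_trans. Qed.

Lemma reach_edge ok x : ok x -> reach tlx hdx ok (tlx x) (hdx x).
Proof. move=> okx; apply: connect1; apply/existsP; exists x; by rewrite okx !eqxx. Qed.

Lemma reach_step ok a x : ok x -> reach tlx hdx ok a (tlx x) -> reach tlx hdx ok a (hdx x).
Proof. move=> okx r; exact: reach_trans r (reach_edge okx). Qed.

Lemma reach_mono ok ok' a b : (forall x, ok x -> ok' x) ->
  reach tlx hdx ok a b -> reach tlx hdx ok' a b.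
Proof.
move=> sub; apply: (@reach_ind ok (reach tlx hdx ok' a)); first exact: reach_refl.
move=> x /sub okx; exact: reach_step.
Qed.

Lemma reach_hits ok (C : pred X) a b :
  reach tlx hdx ok a b -> ~~ reach tlx hdx (predC C) a b ->
  exists x, [/\ ok x, C x & reach tlx hdx ok a (tlx x)].
Proof.
move=> r nrC; pose okC x := ok x && ~~ C x.
have nr : ~~ reach tlx hdx okC a b by apply: contra nrC; apply: reach_mono => y /andP[].
have : reach tlx hdx okC a b \/ exists x, [/\ ok x, C x & reach tlx hdx ok a (tlx x)].
  apply: (@reach_ind ok (fun v => reach tlx hdx okC a v \/
            exists x, [/\ ok x, C x & reach tlx hdx ok a (tlx x)])) r; first by left; exact: reach_refl.
  move=> x okx [r1|ex]; last by right.
  case Cx: (C x).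
    by right; exists x; split=> //; apply: reach_mono r1 => y /andP[].
  by left; apply: reach_step r1; rewrite /okC okx Cx.
by case=> // r1; rewrite r1 in nr.
Qed.

Lemma reach_map (Nd2 X2 : finType) (tl2 hd2 : X2 -> Nd2) (ok2 : pred X2) ok
  (f : Nd -> Nd2) a b :
  (forall x, ok x -> reach tl2 hd2 ok2 (f (tlx x)) (f (hdx x))) ->
  reach tlx hdx ok a b -> reach tl2 hd2 ok2 (f a) (f b).
Proof.
move=> h; apply: (@reach_ind ok (fun v => reach tl2 hd2 ok2 (f a) (f v))).
  exact: connect0.
move=> x okx r; exact: connect_trans r (h x okx).
Qed.

End Reach.

Section BigMin.
Variables (I : finType) (P : pred I) (F : I -> nat) (d : nat).

Lemma bigmin_le i : P i -> \big[minn/d]_(j | P j) F j <= F i.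
Proof.
move=> Pi; rewrite -big_filter.
have : i \in [seq j <- index_enum I | P j] by rewrite mem_filter Pi mem_index_enum.
elim: (filter _ _) => //= j s IH; rewrite in_cons big_cons /=.
case/orP=> [/eqP<-|/IH h]; first exact: geq_minl.
exact: leq_trans (geq_minr _ _) h.
Qed.

Lemma bigmin_le_default : \big[minn/d]_(j | P j) F j <= d.
Proof. by elim/big_rec: _ => // i m _ h; rewrite geq_min h orbT. Qed.

Lemma bigmin_geq x :
  x <= d -> (forall i, P i -> x <= F i) -> x <= \big[minn/d]_(j | P j) F j.
Proof. by move=> xd xF; elim/big_ind: _ => // a b xa xb; rewrite leq_min xa xb. Qed.

End BigMin.

Lemma card_sum_mem (T : finType) (A : {set T}) : #|A| = \sum_(x : T) (x \in A).
Proof. by rewrite -sum1_card big_mkcond. Qed.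

Section Cuts.
Variable N : net.
Local Notation V := (nV N).
Local Notation E := (nE N).
Local Notation R := (reach (@tl N) (@hd N)).
Implicit Types (W C X Y : {set E}) (U S T : {set V}).

Definition separates W U C : bool :=
  [forall u in U, forall e in W, (e \in C) || ~~ R (fun x => x \notin C) u (tl e)].

Lemma separatesP W U C : reflect (forall u e, u \in U -> e \in W -> e \notin C ->
   ~~ R (fun x => x \notin C) u (tl e)) (separates W U C).
Proof.
apply: (iffP forallP) => [H u e uU eW eC | H u].
  move: (H u); rewrite uU /= => /forallP /(_ e); by rewrite eW (negbTE eC).
apply/implyP => uU; apply/forallP => e; apply/implyP => eW.
case: (boolP (e \in C)) => //= eC; exact: H.
Qed.

Lemma separates_self W U : separates W U W.
Proof. by apply/separatesP => u e _ ->. Qed.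

Lemma separatesS W U U' C : U' \subset U -> separates W U C -> separates W U' C.
Proof.
move=> sU /separatesP sep; apply/separatesP => u e /(subsetP sU); exact: sep.
Qed.

Lemma is_cut_separates W U C : is_cut W U C -> separates W U C.
Proof.
case/existsP => K /and3P [_ nr /eqP CE]; apply/separatesP => u e uU eW eC.
apply/negP => r; pose okK x := sd_ok W x && (x \notin K).
have sd_edge x : sd_ok W x -> x.1 \notin C ->
    reach (sd_tl W) (sd_hd W) okK (sd_tl W x) (sd_hd W x).
  move=> ox xC; apply: reach_edge; rewrite /okK ox; apply: contra xC => xK.
  by rewrite CE; exact: imset_f.
have : reach (sd_tl W) (sd_hd W) okK (inl u) (inr e).
  apply: (@reach_trans _ _ _ _ _ _ (inl (tl e))); last first.
    by have := sd_edge (e, false); rewrite /sd_tl /sd_hd /= eW; apply.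
  apply: (reach_map (f := inl) _ r) => x xC.
  case xW: (x \in W); last first.
    by have := sd_edge (x, false); rewrite /sd_tl /sd_hd /= xW; apply.
  apply: (@reach_trans _ _ _ _ _ _ (inr x)).
    by have := sd_edge (x, false); rewrite /sd_tl /sd_hd /= xW; apply.
  by have := sd_edge (x, true); rewrite /sd_tl /sd_hd /sd_ok /= xW; apply.
by move: nr => /forallP /(_ u); rewrite uU => /forallP /(_ e); rewrite eW => /negP.
Qed.

Lemma separates_is_cut W U C : separates W U C -> is_cut W U C.
Proof.
move/separatesP => sep; apply/existsP; exists [set x | sd_ok W x && (x.1 \in C)].
apply/and3P; split.
- by apply/subsetP => x; rewrite !inE => /andP[].
- apply/forallP => u; apply/implyP => uU; apply/forallP => e; apply/implyP => eW.
  apply/negP => r.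
  pose P (y : V + E) : Prop := match y with
           | inl v => R (fun x => x \notin C) u v
           | inr e' => (e' \notin C) && R (fun x => x \notin C) u (tl e') end.
  have : P (inr e).
    apply: (reach_ind (P := P) _ _ r); first exact: reach_refl.
    move=> [x1 b] /andP [ox nK].
    have x1C : x1 \notin C by move: nK; rewrite inE ox.
    case: b ox nK => ox nK /=.
      by rewrite /P /=; case/andP => _ rr; apply: (reach_step _ rr).
    rewrite /P /sd_hd /= => rr; case: (x1 \in W) => /=; last exact: (reach_step _ rr).
    by rewrite x1C.
  by case/andP => eC rr; have := sep u e uU eW eC; rewrite rr.
- apply/eqP/setP => e; apply/idP/imsetP.
    by move=> eC; exists (e, false) => //; rewrite inE /sd_ok /= eC.
  by case=> x; rewrite inE => /andP [_ xC] ->.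
Qed.

Lemma is_cutE W U C : is_cut W U C = separates W U C.
Proof. by apply/idP/idP; [exact: is_cut_separates | exact: separates_is_cut]. Qed.

Lemma is_min_cutP W U X : reflect
  (separates W U X /\ forall Y, separates W U Y -> #|X| <= #|Y|) (is_min_cut W U X).
Proof.
rewrite /is_min_cut is_cutE; apply: (iffP andP) => [[sX /forallP m]|[sX m]].
  by split=> // Y sY; have := m Y; rewrite is_cutE sY.
by split=> //; apply/forallP => Y; apply/implyP; rewrite is_cutE; exact: m.
Qed.

(* The cut of the subdivided graph determined by the node set S. *)
Definition node_cut W S : {set E} :=
  [set e | (tl e \in S) && ((hd e \notin S) || (e \in W))].

Definition reach_from U X : {set V} :=
  [set v | [exists u in U, R (fun x => x \notin X) u v]].

Lemma node_cut_closed W S a b :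
  a \in S -> R (fun x => x \notin node_cut W S) a b -> b \in S.
Proof.
move=> aS; apply: (reach_ind (P := fun v => v \in S)) => // x xn tS.
by move: xn; rewrite inE tS /= negb_or negbK => /andP[].
Qed.

Lemma separates_node_cut W U S : U \subset S -> separates W U (node_cut W S).
Proof.
move=> US; apply/separatesP => u e uU eW eC; apply/negP => r.
have := node_cut_closed (subsetP US u uU) r.
by move: eC; rewrite inE eW orbT andbT => /negbTE ->.
Qed.

Lemma sub_reach_from U X : U \subset reach_from U X.
Proof. by apply/subsetP => u uU; rewrite inE; apply/existsP; exists u; rewrite uU reach_refl. Qed.

Lemma node_cut_reach_from_sub W U X :
  separates W U X -> node_cut W (reach_from U X) \subset X.
Proof.
move/separatesP => sX; apply/subsetP => e.
rewrite !inE => /andP [/existsP [u /andP [uU r]] H]; apply/negPn/negP => eX.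
case/orP: H => [|eW]; last by have := sX u e uU eW eX; rewrite r.
by move/existsP; apply; exists u; rewrite uU (reach_step _ r).
Qed.

Lemma min_cut_node_cut W U X :
  is_min_cut W U X -> X = node_cut W (reach_from U X).
Proof.
case/is_min_cutP => sX minX; apply/esym/eqP.
by rewrite eqEcard node_cut_reach_from_sub // minX // separates_node_cut ?sub_reach_from.
Qed.

Lemma node_cut_submod W S T :
  #|node_cut W (S :&: T)| + #|node_cut W (S :|: T)| <= #|node_cut W S| + #|node_cut W T|.
Proof.
rewrite !card_sum_mem -!big_split /=; apply: leq_sum => e _; rewrite !inE.
by case: (tl e \in S); case: (tl e \in T); case: (hd e \in S); case: (hd e \in T);
   case: (e \in W).
Qed.

Lemma separates_node_cut_mono W U S S' : U \subset S -> S \subset S' ->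
  separates (node_cut W S') U (node_cut W S).
Proof.
move=> US SS'; apply/separatesP => u e uU eS' eS; apply/negP => r.
have tS := node_cut_closed (subsetP US u uU) r.
move: eS eS'; rewrite !inE tS (subsetP SS' _ tS) /= negb_or negbK => /andP [hS eW].
by rewrite (subsetP SS' _ hS) (negbTE eW).
Qed.

Section PrimaryMinCut.
Variables (W : {set E}) (U : {set V}).

(* Lexicographic order on (cut size, node-set size): its minimiser is the
   smallest node set carrying a minimum cut. *)
Let weight S := #|node_cut W S| * #|V|.+1 + #|S|.

Let core := [arg min_(S < setT | U \subset S) weight S].

Let core_spec : U \subset core /\ forall S, U \subset S -> weight core <= weight S.
Proof. by rewrite /core; case: arg_minnP => // S US min. Qed.

Lemma core_cut_min S : U \subset S -> #|node_cut W core| <= #|node_cut W S|.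
Proof.
move=> /(proj2 core_spec); rewrite /weight => le; rewrite leqNgt; apply/negP => lt.
have := leq_mul lt (leqnn #|V|.+1); have := max_card S; have := max_card core; lia.
Qed.

Lemma core_least S :
  U \subset S -> #|node_cut W S| = #|node_cut W core| -> core \subset S.
Proof.
move=> US eqS; have Ucore := proj1 core_spec.
have UI : U \subset core :&: S by rewrite subsetI Ucore US.
have := core_cut_min UI; have := core_cut_min (subset_trans Ucore (subsetUl core S)).
have := node_cut_submod W core S => h1 h2 h3.
have ceq : #|node_cut W (core :&: S)| = #|node_cut W core| by lia.
have := proj2 core_spec _ UI; rewrite /weight ceq leq_add2l => le.
by apply/setIidPl/eqP; rewrite eqEcard subsetIl le.
Qed.

Lemma primary_min_cut_exists : exists X, is_primary_min_cut W U X.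
Proof.
have Ucore := proj1 core_spec; exists (node_cut W core).
have mincut : is_min_cut W U (node_cut W core).
  apply/is_min_cutP; split; first exact: separates_node_cut.
  move=> Y sY; apply: leq_trans (core_cut_min (sub_reach_from U Y)) _.
  exact/subset_leq_card/node_cut_reach_from_sub.
rewrite /is_primary_min_cut mincut; apply/forallP => C; apply/implyP => mC.
have CE := min_cut_node_cut mC.
have cardC : #|node_cut W (reach_from U C)| = #|node_cut W core|.
  case/is_min_cutP: mincut => sX minX; case/is_min_cutP: (mC) => sC minC.
  by rewrite -CE; apply/eqP; rewrite eqn_leq minC // minX.
rewrite is_cutE CE; apply: separates_node_cut_mono => //.
exact: core_least (sub_reach_from U C) cardC.
Qed.

End PrimaryMinCut.

Definition coreach W : {set V} := [set v | [exists w in W, to_edge v w]].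

Lemma node_cut_setUC_sub W S :
  node_cut W (S :|: ~: coreach W) \subset
  [set e in node_cut W S | (e \in W) || (hd e \in coreach W)].
Proof.
apply/subsetP => x; rewrite !inE => /andP [tx H].
have tl_W : (x \in W) ==> (tl x \in coreach W).
  by apply/implyP => xW; rewrite inE; apply/existsP; exists x; rewrite xW /to_edge reach_refl.
have tl_hd : (hd x \in coreach W) ==> (tl x \in coreach W).
  apply/implyP; rewrite !inE => /existsP [w /andP [wW r]]; apply/existsP; exists w.
  by rewrite wW /to_edge (reach_trans (@reach_edge _ _ _ _ predT x isT) r).
move: tl_W tl_hd tx H; rewrite !inE.
by case: (x \in W); case: (tl x \in S); case: (hd x \in S);
   case: [exists w in W, to_edge (tl x) w]; case: [exists w in W, to_edge (hd x) w].
Qed.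

(* Enlarging the source side by all nodes that cannot reach W gives a separator
   inside X, which by minimality is all of X. *)
Lemma min_cut_edges W U X e :
  is_min_cut W U X -> e \in X -> (e \in W) || (hd e \in coreach W).
Proof.
move=> mX eX; have XE := min_cut_node_cut mX; case/is_min_cutP: mX => _ minX.
set S := reach_from U X in XE.
have sub := node_cut_setUC_sub W S; rewrite -XE in sub.
have sep : separates W U (node_cut W (S :|: ~: coreach W)).
  exact/separates_node_cut/(subset_trans (sub_reach_from U X))/subsetUl.
have : [set e in X | (e \in W) || (hd e \in coreach W)] == X.
  rewrite eqEcard (leq_trans (minX _ sep)) ?subset_leq_card // andbT.
  by apply/subsetP => y; rewrite inE => /andP[].
by move/eqP/setP/(_ e); rewrite inE eX.
Qed.

Lemma min_cut_Dset W U X : is_min_cut W U X -> Dset X \subset Dset W.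
Proof.
move=> mX; apply/subsetP => s; rewrite !inE => /andP [sS /existsP [e /andP [eX te]]].
rewrite sS /=; case/orP: (min_cut_edges mX eX) => [eW|].
  by apply/existsP; exists e; rewrite eW.
rewrite inE => /existsP [w /andP [wW r]]; apply/existsP; exists w.
by rewrite wW /to_edge (reach_trans (reach_step _ te) r).
Qed.

Lemma Iset_replace W X C : separates W (Dset W) X -> W \subset C ->
  Iset C \subset Iset ((C :\: W) :|: X).
Proof.
move=> /separatesP sX WC; apply/subsetP => s; rewrite !inE => /andP [sS nr].
rewrite sS /=; apply/negP => r.
have [x [xC' xC rx]] := reach_hits (C := fun x => x \in C) r nr.
have [xW xX] : x \in W /\ x \notin X.
  by move: xC'; rewrite !inE xC andbT negb_or negbK => /andP[].
have sD : s \in Dset W.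
  by rewrite !inE sS; apply/existsP; exists x; rewrite xW; exact: reach_mono rx.
have := sX s x sD xW xX; rewrite (reach_mono _ rx) // => y.
by apply: contra => yX; rewrite inE yX orbT.
Qed.

Lemma Omega_min_cut W X : is_min_cut W (Dset W) X -> Omega X <= Omega W.
Proof.
move=> mX; have DX := min_cut_Dset mX; case/is_min_cutP: mX => sX _.
apply: bigmin_geq; first exact: bigmin_le_default.
move=> C /and3P [lamC WC DI]; have IC := Iset_replace sX WC.
apply: (@leq_trans (#|(C :\: W) :|: X| - #|X|)).
  apply: bigmin_le; rewrite subsetUr (subset_trans DX (subset_trans DI IC)) !andbT.
  have [s sI] : exists s, s \in Iset C by apply/set0Pn.
  by apply/set0Pn; exists s; exact: (subsetP IC).
have := cardsU (C :\: W) X; rewrite cardsD (setIidPr WC); lia.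
Qed.

Lemma separates_Dset_trans W X Y : separates W (Dset W) X -> separates X (Dset X) Y ->
  separates W (Dset W) Y.
Proof.
move=> /separatesP sX /separatesP sY; apply/separatesP => u w uD wW wY; apply/negP => r.
have uS : u \in sources N by move: uD; rewrite inE => /andP[].
have uDX x : x \in X -> R (fun y => y \notin Y) u (tl x) -> u \in Dset X.
  by move=> xX rx; rewrite inE uS; apply/existsP; exists x; rewrite xX; exact: reach_mono rx.
case: (boolP (w \in X)) => wX; first by have := sY u w (uDX w wX r) wX wY; rewrite r.
have [x [xY xX rx]] := reach_hits (C := fun x => x \in X) r (sX u w uD wW wX).
by have := sY u x (uDX x xX rx) xX xY; rewrite rx.
Qed.

Lemma primary_min_cut_primary W X : is_primary_min_cut W (Dset W) X -> primary X.
Proof.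
case/andP => mX /forallP prim; have DX := min_cut_Dset mX.
case/is_min_cutP: (mX) => sX minX.
have mXX : is_min_cut X (Dset X) X.
  apply/is_min_cutP; split=> [|Y sY]; first exact: separates_self.
  exact/minX/(separates_Dset_trans sX).
rewrite /primary /is_primary_min_cut mXX; apply/forallP => C; apply/implyP => mC.
case/is_min_cutP: (mC) => sC minC.
have mWC : is_min_cut W (Dset W) C.
  apply/is_min_cutP; split=> [|Y sY]; first exact: separates_Dset_trans sC.
  exact: leq_trans (minC _ (separates_self X (Dset X))) (minX _ sY).
by move: (prim C); rewrite mWC !is_cutE; apply: separatesS.
Qed.

End Cuts.

Theorem lemma8 (N : net) (r : nat) :
  wf_net N ->
  \big[minn/#|nE N|]_(W : {set nE N} | #|W| <= r) Omega W =
  \big[minn/#|nE N|]_(W : {set nE N} | (#|W| <= r) && primary W) Omega W.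
Proof.
(* Replacing W by its primary minimum cut needs no property of the network. *)
move=> _; apply/eqP; rewrite eqn_leq; apply/andP; split.
  apply: bigmin_geq => [|W /andP [Wr _]]; [exact: bigmin_le_default | exact: bigmin_le].
apply: bigmin_geq => [|W Wr]; first exact: bigmin_le_default.
have [X pX] := primary_min_cut_exists W (Dset W).
have mX : is_min_cut W (Dset W) X by case/andP: pX.
have XW : #|X| <= #|W| by case/is_min_cutP: mX => _; apply; exact: separates_self.
apply: leq_trans (Omega_min_cut mX); apply: bigmin_le.
by rewrite (leq_trans XW Wr) (primary_min_cut_primary pX).
Qed.
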